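(* For every integer $t\ge 2$, the set $S_t$ is in general position, i.e., no three of its points are collinear.
   Context: For integers $r\ge 1$ let $\delta_r:=3\cdot 4^{r-1}$ and $\delta_r':=(3r+1)\cdot 4^{r-1}$. For positive integers $k,l$ define $S_{k,l}\subset\mathbb{Z}^2$ recursively: $S_{k,l}:=\{(0,0)\}$ if $k\le 2$ or $l\le 2$; otherwise $S_{k,l}:=S_{k-1,l}\cup\{(x+\delta_{k+l-1},\,y+\delta_{k+l-1}'):(x,y)\in S_{k,l-1}\}$. Let $t\ge 2$ be an integer. For $0\le i\le t-3$ define $v_i:=(3(t-i),-3i)$, and let $w_0:=(0,0)$, $w_{i+1}:=w_i+v_i$ for $i=0,\dots,t-3$. For $i=0,\dots,t-2$ let $q_i:=(t+1)4^{t+1}w_i$. Define $S_t:=\bigcup_{i=0}^{t-2}\{p+q_i: p\in S_{t-i,i+2}\}$. *)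

From Stdlib Require Import ZArith List Lia.
Import ListNotations.
Open Scope Z_scope.

Definition pt := (Z * Z)%type.

Definition delta (r : nat) : Z := 3 * 4 ^ (Z.of_nat r - 1).
Definition delta' (r : nat) : Z := (3 * Z.of_nat r + 1) * 4 ^ (Z.of_nat r - 1).

Definition padd (p q : pt) : pt := (fst p + fst q, snd p + snd q).

(* S_{k,l} as a list of points (k, l positive; for k = 0 or l = 0 we
   also return {(0,0)}, matching the base case "k <= 2 or l <= 2"). *)
Fixpoint Skl (k : nat) : nat -> list pt :=
  match k with
  | O => fun _ => [(0, 0)]
  | S k' => fix g (l : nat) : list pt :=
      match l with
      | O => [(0, 0)]
      | S l' =>
          if (Nat.leb k 2 || Nat.leb l 2)%bool then [(0, 0)]
          else Skl k' l ++
               map (fun p => padd p (delta (k + l - 1), delta' (k + l - 1))) (g l')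
      end
  end.

Definition inS (k l : nat) (p : pt) : Prop := In p (Skl k l).

Definition v (t i : nat) : pt := (3 * (Z.of_nat t - Z.of_nat i), - 3 * Z.of_nat i).
Fixpoint w (t i : nat) : pt :=
  match i with
  | O => (0, 0)
  | S i' => padd (w t i') (v t i')
  end.
Definition q (t i : nat) : pt :=
  ((Z.of_nat t + 1) * 4 ^ (Z.of_nat t + 1) * fst (w t i),
   (Z.of_nat t + 1) * 4 ^ (Z.of_nat t + 1) * snd (w t i)).

Definition St (t : nat) (x : pt) : Prop :=
  exists i : nat, (i <= t - 2)%nat /\
    exists p : pt, inS (t - i) (i + 2) p /\ x = padd p (q t i).

Definition collinear (a b c : pt) : Prop :=
  (fst b - fst a) * (snd c - snd a) - (snd b - snd a) * (fst c - fst a) = 0.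

Definition general_position (X : pt -> Prop) : Prop :=
  forall a b c : pt, X a -> X b -> X c ->
    a <> b -> a <> c -> b <> c -> ~ collinear a b c.

Example ex1 : length (Skl 3 3) = 2%nat. Proof. reflexivity. Qed.
Example ex2 : length (Skl 4 4) = 6%nat. Proof. reflexivity. Qed.

From Stdlib Require Import ZArith List Lia.
Open Scope Z_scope.

(* Every point of S_{k,l} is a sum of distinct generators e_r = (delta_r, delta'_r)
   with r <= k + l - 1.  The generator e_r dominates all smaller ones, so a nonzero
   difference of two such subset sums whose largest differing generator is e_r has
   slope strictly between r and r + 1.  Among three subset sums, splitting by the
   largest generator, two differences therefore have distinct slopes, and the
   subset sums are in general position.

   The pieces of S_t are these sets translated by q_i = (t+1) 4^(t+1) w_i, a huge
   multiple of the vertices w_i of a strictly concave polygon.  Two points of one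
   piece and one of another cannot align, because the translation between pieces
   points below the diagonal whereas differences inside a piece have slope > 1;
   three points of three pieces cannot align, because in their cross product the
   turn of the polygon, scaled by ((t+1) 4^(t+1))^2, dominates all other terms. *)

Definition psub (p p' : pt) : pt := (fst p - fst p', snd p - snd p').
Definition pscale (k : Z) (p : pt) : pt := (k * fst p, k * snd p).
Definition cross (u u' : pt) : Z := fst u * snd u' - snd u * fst u'.
Definition l1 (u : pt) : Z := Z.abs (fst u) + Z.abs (snd u).
Definition in_box (M : Z) (p : pt) : Prop := 0 <= fst p <= M /\ 0 <= snd p <= M.
Definition in_square (M : Z) (p : pt) : Prop := Z.abs (fst p) <= M /\ Z.abs (snd p) <= M.

Lemma padd_origin p : padd p (0, 0) = p.
Proof. destruct p; unfold padd; cbn; f_equal; ring. Qed.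

Lemma psub_padd_r a b d : psub (padd a d) (padd b d) = psub a b.
Proof. unfold psub, padd; cbn [fst snd]; f_equal; ring. Qed.

Lemma psub_padd_pscale M a b u v :
  psub (padd b (pscale M u)) (padd a (pscale M v)) = padd (psub b a) (pscale M (psub u v)).
Proof. unfold psub, padd, pscale; cbn [fst snd]; f_equal; ring. Qed.

Lemma cross_psub_shift a b c : cross (psub b a) (psub c a) = cross (psub b a) (psub c b).
Proof. unfold cross, psub; cbn [fst snd]; ring. Qed.

Lemma in_box_psub M a b : in_box M a -> in_box M b -> in_square M (psub b a).
Proof. unfold in_box, in_square, psub; cbn [fst snd]; lia. Qed.

Lemma mul_le_abs x y A B : Z.abs x <= A -> Z.abs y <= B -> x * y <= A * B.
Proof.
  intros Hx Hy.
  apply (Z.le_trans _ (Z.abs (x * y))); [lia |].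
  rewrite Z.abs_mul. apply Z.mul_le_mono_nonneg; lia.
Qed.

Lemma cross_perturbed_le M P Q U V : 0 <= M -> in_square M P -> in_square M Q ->
  cross (padd P (pscale M U)) (padd Q (pscale M V)) <= M * M * (cross U V + l1 U + l1 V + 2).
Proof.
  destruct P as [p1 p2], Q as [q1 q2], U as [u1 u2], V as [v1 v2].
  unfold in_square, cross, l1, padd, pscale; cbn [fst snd]. intros HM [Hp1 Hp2] [Hq1 Hq2].
  assert (Hmid : (u1 * q2 - u2 * q1) + (p1 * v2 - p2 * v1)
                 <= M * (Z.abs u1 + Z.abs u2 + Z.abs v1 + Z.abs v2)).
  { pose proof (mul_le_abs u1 q2 _ M (Z.le_refl _) Hq2).
    pose proof (mul_le_abs (- u2) q1 (Z.abs u2) M ltac:(rewrite Z.abs_opp; lia) Hq1).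
    pose proof (mul_le_abs p1 v2 M _ Hp1 (Z.le_refl _)).
    pose proof (mul_le_abs (- p2) v1 M _ ltac:(rewrite Z.abs_opp; lia) (Z.le_refl _)).
    lia. }
  pose proof (Z.mul_le_mono_nonneg_l _ _ M HM Hmid).
  pose proof (mul_le_abs p1 q2 M M Hp1 Hq2).
  pose proof (mul_le_abs (- p2) q1 M M ltac:(rewrite Z.abs_opp; lia) Hq1).
  lia.
Qed.

Lemma collinear_cross a b c : collinear a b c <-> cross (psub b a) (psub c a) = 0.
Proof. reflexivity. Qed.

Lemma collinear_perm a b c : collinear a b c ->
  collinear a c b /\ collinear b a c /\ collinear b c a /\ collinear c a b /\ collinear c b a.
Proof. unfold collinear; lia. Qed.

Lemma collinear_translate a b c d :
  collinear (padd a d) (padd b d) (padd c d) <-> collinear a b c.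
Proof. unfold collinear, padd; cbn [fst snd]; split; lia. Qed.

Lemma general_position_sub (X Y : pt -> Prop) :
  (forall x, X x -> Y x) -> general_position Y -> general_position X.
Proof. intros HXY HY a b c Ha Hb Hc. apply HY; auto. Qed.

Lemma general_position_layers (P : nat -> pt -> Prop) :
  (forall i j l a b c, (i <= j <= l)%nat -> P i a -> P j b -> P l c ->
     a <> b -> a <> c -> b <> c -> ~ collinear a b c) ->
  general_position (fun x => exists i, P i x).
Proof.
  intros H a b c [i Ha] [j Hb] [l Hc] Hab Hac Hbc Hcol.
  pose proof (not_eq_sym Hab) as Hba; pose proof (not_eq_sym Hac) as Hca;
    pose proof (not_eq_sym Hbc) as Hcb.
  destruct (collinear_perm _ _ _ Hcol) as (Hacb & Hbac & Hbca & Hcab & Hcba).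
  destruct (Nat.le_ge_cases i j), (Nat.le_ge_cases j l), (Nat.le_ge_cases i l);
    first
      [ exact (H i j l a b c ltac:(lia) Ha Hb Hc Hab Hac Hbc Hcol)
      | exact (H i l j a c b ltac:(lia) Ha Hc Hb Hac Hab Hcb Hacb)
      | exact (H j i l b a c ltac:(lia) Hb Ha Hc Hba Hbc Hac Hbac)
      | exact (H j l i b c a ltac:(lia) Hb Hc Ha Hbc Hba Hca Hbca)
      | exact (H l i j c a b ltac:(lia) Hc Ha Hb Hca Hcb Hab Hcab)
      | exact (H l j i c b a ltac:(lia) Hc Hb Ha Hcb Hca Hba Hcba) ].
Qed.

Definition in_band (m : Z) (d : pt) : Prop :=
  (0 < fst d /\ m * fst d < snd d < (m + 1) * fst d) \/
  (fst d < 0 /\ (m + 1) * fst d < snd d < m * fst d).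

Lemma in_band_psub_sym m a b : in_band m (psub a b) -> in_band m (psub b a).
Proof. unfold in_band, psub; cbn [fst snd]; lia. Qed.

Lemma cross_in_band_lt m m' d d' :
  in_band m d -> in_band m' d' -> m < m' -> cross d d' <> 0.
Proof.
  unfold in_band, cross.
  intros [(H1 & H2 & H3) | (H1 & H2 & H3)] [(G1 & G2 & G3) | (G1 & G2 & G3)] Hm.
  (* The line of slope [m'] separates [d] from [d']. *)
  - assert (snd d < m' * fst d) by nia. nia.
  - assert (snd d < m' * fst d) by nia. nia.
  - assert (m' * fst d < snd d) by nia. nia.
  - assert (m' * fst d < snd d) by nia. nia.
Qed.

Lemma not_collinear_in_band_lt m m' a b c :
  in_band m (psub b a) -> in_band m' (psub c a) -> m < m' -> ~ collinear a b c.
Proof. exact (cross_in_band_lt m m' (psub b a) (psub c a)). Qed.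

Lemma cross_in_band_below m d z : 1 <= m -> in_band m d ->
  (0 < fst z /\ snd z <= fst z) \/ (fst z < 0 /\ fst z <= snd z) -> cross d z <> 0.
Proof.
  unfold in_band, cross.
  intros Hm [(H1 & H2 & _) | (H1 & _ & H3)] Hz.
  - assert (fst d < snd d) by nia. destruct Hz as [(G1 & G2) | (G1 & G2)]; nia.
  - assert (snd d < fst d) by nia. destruct Hz as [(G1 & G2) | (G1 & G2)]; nia.
Qed.

Definition gen (r : nat) : pt := (delta r, delta' r).

Inductive subset_sum : nat -> pt -> Prop :=
| subset_sum_nil : subset_sum 0 (0, 0)
| subset_sum_skip n p : subset_sum n p -> subset_sum (S n) p
| subset_sum_take n p : subset_sum n p -> subset_sum (S n) (padd p (gen (S n))).

Lemma subset_sum_origin n : subset_sum n (0, 0).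
Proof. induction n; constructor; assumption. Qed.

Lemma Skl_subset_sum k : forall l p, In p (Skl k l) -> subset_sum (k + l - 1) p.
Proof.
  induction k as [|k IHk].
  - intros l p [<- | []]. apply subset_sum_origin.
  - induction l as [|l IHl]; intros p Hp.
    + destruct Hp as [<- | []]. apply subset_sum_origin.
    + cbn [Skl] in Hp; fold (Skl k (S l)) in Hp.
      destruct (_ || _)%bool.
      { destruct Hp as [<- | []]. apply subset_sum_origin. }
      apply in_app_or in Hp as [Hp | Hp].
      * replace (S k + S l - 1)%nat with (S (k + S l - 1)) by lia.
        now constructor; apply IHk.
      * apply in_map_iff in Hp as [p' [<- Hp']].
        replace (S k + S l - 1)%nat with (S (S k + l - 1)) by lia.
        now constructor; apply IHl.
Qed.

Lemma gen_S n :
  gen (S n) = (3 * 4 ^ Z.of_nat n, (3 * Z.of_nat n + 4) * 4 ^ Z.of_nat n).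
Proof.
  unfold gen, delta, delta'. rewrite Nat2Z.inj_succ, Z.sub_1_r, Z.pred_succ.
  f_equal. ring.
Qed.

Lemma pow4_succ n : 4 ^ Z.of_nat (S n) = 4 * 4 ^ Z.of_nat n.
Proof. rewrite Nat2Z.inj_succ, Z.pow_succ_r by lia. ring. Qed.

Lemma subset_sum_box n p : subset_sum n p ->
  0 <= fst p <= 4 ^ Z.of_nat n - 1 /\ 0 <= snd p <= Z.of_nat n * 4 ^ Z.of_nat n.
Proof.
  induction 1 as [| n p _ IH | n p _ IH].
  - cbn. lia.
  - rewrite pow4_succ, Nat2Z.inj_succ. pose proof (Z.pow_pos_nonneg 4 (Z.of_nat n)). nia.
  - rewrite gen_S. destruct p as [x y]. cbn [padd fst snd] in *.
    rewrite pow4_succ, Nat2Z.inj_succ. nia.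
Qed.

Lemma subset_sum_slopes n p : subset_sum n p ->
  let k := Z.of_nat n in let K := 4 ^ k in
  0 <= (k + 1) * fst p - snd p <= K - (k + 1) /\
  0 <= (k + 2) * fst p - snd p <= 2 * K - (k + 2).
Proof.
  induction 1 as [| n p Hp IH | n p Hp IH]; cbv zeta in *.
  - cbn. lia.
  - pose proof (subset_sum_box n p Hp).
    rewrite pow4_succ, Nat2Z.inj_succ. nia.
  - pose proof (subset_sum_box n p Hp).
    rewrite gen_S. destruct p as [x y]. cbn [padd fst snd] in *.
    rewrite pow4_succ, Nat2Z.inj_succ. nia.
Qed.

Lemma subset_sum_band_top n x z : subset_sum n x -> subset_sum n z ->
  in_band (Z.of_nat (S n)) (psub (padd z (gen (S n))) x).
Proof.
  intros Hx Hz.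
  pose proof (subset_sum_slopes n x Hx) as Sx; pose proof (subset_sum_slopes n z Hz) as Sz.
  cbv zeta in Sx, Sz. rewrite gen_S, Nat2Z.inj_succ.
  destruct x as [x1 x2], z as [z1 z2]. unfold in_band, psub, padd; cbn [fst snd] in *.
  left. nia.
Qed.

Lemma subset_sum_diff_band n x y : subset_sum n x -> subset_sum n y -> x <> y ->
  exists m, 1 <= m <= Z.of_nat n /\ in_band m (psub y x).
Proof.
  intros Hx. revert y.
  induction Hx as [| n x Hx IH | n x Hx IH]; intros y Hy Hxy;
    inversion Hy as [| ? y' Hy' | ? y' Hy']; subst.
  - contradiction.
  - destruct (IH y Hy' Hxy) as [m [Hm Hb]]. exists m. split; [lia | exact Hb].
  - exists (Z.of_nat (S n)). split; [lia | exact (subset_sum_band_top n x y' Hx Hy')].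
  - exists (Z.of_nat (S n)). split; [lia |].
    apply in_band_psub_sym, (subset_sum_band_top n y x Hy' Hx).
  - rewrite psub_padd_r.
    destruct (IH y' Hy') as [m [Hm Hb]]; [congruence |].
    exists m. split; [lia | exact Hb].
Qed.

Definition layer (n i : nat) (x : pt) : Prop :=
  exists y, subset_sum n y /\ x = padd y (match i with O => (0, 0) | S _ => gen (S n) end).

Lemma subset_sum_layers n x : subset_sum (S n) x -> exists i, layer n i x.
Proof.
  intros Hx. inversion Hx as [| ? y Hy | ? y Hy]; subst.
  - exists O, x. split; [exact Hy | symmetry; apply padd_origin].
  - exists 1%nat, y. split; [exact Hy | reflexivity].
Qed.

Lemma subset_sum_general_position n : general_position (subset_sum n).
Proof.
  induction n as [| n IH].
  - intros a b c Ha Hb _ Hab. inversion Ha; inversion Hb; congruence.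
  - apply (general_position_sub _ _ (subset_sum_layers n)), general_position_layers.
    intros [| i] [| j] [| l] a b c Hijl [ya [Ha ->]] [yb [Hb ->]] [yc [Hc ->]] Hab Hac Hbc;
      try lia; try (rewrite collinear_translate; apply IH; congruence).
    + rewrite !padd_origin in *.
      destruct (subset_sum_diff_band n ya yb Ha Hb Hab) as [m [Hm Hba]].
      apply (not_collinear_in_band_lt m (Z.of_nat (S n))); [exact Hba | | lia].
      exact (subset_sum_band_top n ya yc Ha Hc).
    + rewrite !padd_origin in *. intros Hcol.
      destruct (collinear_perm _ _ _ Hcol) as (_ & _ & Hbca & _).
      destruct (subset_sum_diff_band n yb yc Hb Hc) as [m [Hm Hcb]]; [congruence |].
      revert Hbca. apply (not_collinear_in_band_lt m (Z.of_nat (S n))).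
      * rewrite psub_padd_r. exact Hcb.
      * apply in_band_psub_sym, (subset_sum_band_top n ya yb Ha Hb).
      * lia.
Qed.

Lemma w_closed_form t i :
  2 * fst (w t i) = 3 * Z.of_nat i * (2 * Z.of_nat t - Z.of_nat i + 1) /\
  2 * snd (w t i) = - 3 * Z.of_nat i * (Z.of_nat i - 1).
Proof.
  induction i as [| i IH]; [cbn; lia |].
  cbn [w]. unfold padd, v; cbn [fst snd]. rewrite Nat2Z.inj_succ. lia.
Qed.

Lemma w_diff_closed_form t i j :
  let T := Z.of_nat t in let I := Z.of_nat i in let J := Z.of_nat j in
  2 * fst (psub (w t j) (w t i)) = 3 * (J - I) * (2 * T - I - J + 1) /\
  2 * snd (psub (w t j) (w t i)) = - 3 * (J - I) * (I + J - 1).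
Proof.
  destruct (w_closed_form t i), (w_closed_form t j). unfold psub; cbn [fst snd]. lia.
Qed.

Lemma w_gap t i j : (i < j <= t - 2)%nat ->
  2 <= fst (psub (w t j) (w t i)) /\ snd (psub (w t j) (w t i)) <= 0.
Proof.
  intros Hij. destruct (w_diff_closed_form t i j) as [Hx Hy]; cbv zeta in *.
  assert (1 * 6 <= (Z.of_nat j - Z.of_nat i) * (2 * Z.of_nat t - Z.of_nat i - Z.of_nat j + 1))
    by (apply Z.mul_le_mono_nonneg; lia).
  assert (0 <= (Z.of_nat j - Z.of_nat i) * (Z.of_nat i + Z.of_nat j - 1))
    by (apply Z.mul_nonneg_nonneg; lia).
  lia.
Qed.

Lemma w_turn t i j l : (i < j < l)%nat -> (l <= t - 2)%nat ->
  let U := psub (w t j) (w t i) in let V := psub (w t l) (w t j) in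
  cross U V + l1 U + l1 V + 2 < 0.
Proof.
  intros Hijl Hl U V.
  destruct (w_gap t i j ltac:(lia)) as [HUx HUy], (w_gap t j l ltac:(lia)) as [HVx HVy].
  destruct (w_diff_closed_form t i j) as [Ux2 Uy2], (w_diff_closed_form t j l) as [Vx2 Vy2].
  cbv zeta in *. fold U in HUx, HUy, Ux2, Uy2. fold V in HVx, HVy, Vx2, Vy2. clearbody U V.
  set (T := Z.of_nat t) in *. set (a := Z.of_nat j - Z.of_nat i) in *.
  set (b := Z.of_nat l - Z.of_nat j) in *.
  (* [w] runs along a parabola, so its chords turn clockwise. *)
  assert (Hcross : 4 * cross U V = - 18 * T * a * b * (a + b)).
  { replace (4 * cross U V) with ((2 * fst U) * (2 * snd V) - (2 * snd U) * (2 * fst V))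
      by (unfold cross; ring).
    rewrite Ux2, Uy2, Vx2, Vy2. unfold a, b, T. ring. }
  assert (Hab : 0 <= (a * b - 1) * (T * (a + b))).
  { apply Z.mul_nonneg_nonneg; [| apply Z.mul_nonneg_nonneg; lia].
    assert (1 * 1 <= a * b) by (apply Z.mul_le_mono_nonneg; lia). lia. }
  unfold l1.
  rewrite (Z.abs_eq (fst U)), (Z.abs_neq (snd U)), (Z.abs_eq (fst V)), (Z.abs_neq (snd V))
    by lia.
  clearbody T a b. lia.
Qed.

Definition spread (t : nat) : Z := (Z.of_nat t + 1) * 4 ^ (Z.of_nat t + 1).

Lemma q_pscale t i : q t i = pscale (spread t) (w t i).
Proof. reflexivity. Qed.

Lemma spread_pos t : 0 < spread t.
Proof. unfold spread. pose proof (Z.pow_pos_nonneg 4 (Z.of_nat t + 1)). nia. Qed.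

Lemma subset_sum_in_box t p : subset_sum (S t) p -> in_box (spread t) p.
Proof.
  intros Hp. apply subset_sum_box in Hp.
  unfold in_box, spread. rewrite Nat2Z.inj_succ, <- Z.add_1_r in Hp.
  pose proof (Z.pow_pos_nonneg 4 (Z.of_nat t + 1)). nia.
Qed.

Definition in_piece (t i : nat) (x : pt) : Prop :=
  exists p, subset_sum (S t) p /\ x = padd p (q t i).

Lemma St_in_pieces t : (2 <= t)%nat -> forall x, St t x ->
  exists i, (i <= t - 2)%nat /\ in_piece t i x.
Proof.
  intros Ht x [i [Hi [p [Hp ->]]]]. exists i. split; [exact Hi |]. exists p. split; [| reflexivity].
  apply Skl_subset_sum in Hp. replace (S t) with (t - i + (i + 2) - 1)%nat by lia. exact Hp.
Qed.

Lemma piece_general_position t i : general_position (in_piece t i).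
Proof.
  intros a b c [pa [Ha ->]] [pb [Hb ->]] [pc [Hc ->]] Hab Hac Hbc.
  rewrite collinear_translate.
  apply (subset_sum_general_position (S t)); auto; congruence.
Qed.

Lemma piece_pair_not_collinear t i j a b c : (i <= t - 2)%nat -> (j <= t - 2)%nat -> i <> j ->
  in_piece t i a -> in_piece t i b -> in_piece t j c -> a <> b -> ~ collinear a b c.
Proof.
  intros Hi Hj Hij [pa [Ha ->]] [pb [Hb ->]] [pc [Hc ->]] Hab.
  destruct (subset_sum_diff_band (S t) pa pb Ha Hb) as [m [Hm Hband]]; [congruence |].
  rewrite collinear_cross, psub_padd_r, !q_pscale, psub_padd_pscale.
  apply (cross_in_band_below m); [lia | exact Hband |].
  destruct (in_box_psub _ _ _ (subset_sum_in_box t pa Ha) (subset_sum_in_box t pc Hc))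
    as [Q1 Q2].
  pose proof (spread_pos t) as HM.
  apply Nat.lt_gt_cases in Hij as [Hlt | Hgt]; [left | right].
  - destruct (w_gap t i j ltac:(lia)) as [U1 U2].
    unfold padd, pscale, psub in *; cbn [fst snd] in *. nia.
  - destruct (w_gap t j i ltac:(lia)) as [U1 U2].
    unfold padd, pscale, psub in *; cbn [fst snd] in *. nia.
Qed.

Lemma piece_triple_not_collinear t i j l a b c : (i < j < l)%nat -> (l <= t - 2)%nat ->
  in_piece t i a -> in_piece t j b -> in_piece t l c -> ~ collinear a b c.
Proof.
  intros Hijl Hl [pa [Ha ->]] [pb [Hb ->]] [pc [Hc ->]].
  rewrite collinear_cross, cross_psub_shift, !q_pscale, !psub_padd_pscale.
  pose proof (spread_pos t) as HM.
  pose proof (cross_perturbed_le (spread t) (psub pb pa) (psub pc pb)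
    (psub (w t j) (w t i)) (psub (w t l) (w t j)) ltac:(lia)
    (in_box_psub _ _ _ (subset_sum_in_box t pa Ha) (subset_sum_in_box t pb Hb))
    (in_box_psub _ _ _ (subset_sum_in_box t pb Hb) (subset_sum_in_box t pc Hc))) as Hle.
  pose proof (w_turn t i j l Hijl Hl) as Hturn. cbv zeta in Hturn.
  pose proof (Z.mul_pos_neg (spread t * spread t) _ ltac:(nia) Hturn).
  lia.
Qed.

Theorem proposition4 : forall t : nat, (2 <= t)%nat -> general_position (St t).
Proof.
  intros t Ht.
  apply (general_position_sub _ _ (St_in_pieces t Ht)), general_position_layers.
  intros i j l a b c Hijl [Hi Ha] [Hj Hb] [Hl Hc] Hab Hac Hbc.
  destruct (Nat.eq_dec i j) as [<- | Hij].
  - destruct (Nat.eq_dec i l) as [<- | Hil].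
    + exact (piece_general_position t i a b c Ha Hb Hc Hab Hac Hbc).
    + exact (piece_pair_not_collinear t i l a b c Hi Hl Hil Ha Hb Hc Hab).
  - destruct (Nat.eq_dec j l) as [<- | Hjl].
    + intros Hcol. destruct (collinear_perm _ _ _ Hcol) as (_ & _ & Hbca & _).
      exact (piece_pair_not_collinear t j i b c a Hj Hi (not_eq_sym Hij) Hb Hc Ha Hbc Hbca).
    + exact (piece_triple_not_collinear t i j l a b c ltac:(lia) Hl Ha Hb Hc).
Qed.
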